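(* Let $G=(V,E)$ be a finite block graph. If $G$ is identifiable (no distinct vertices $u,v$ with $N[u]=N[v]$), then $\gamma^{LD}(G)\leq n_Q(G)$; otherwise $\gamma^{LD}(G)\leq |V|-1$. Here $n_Q(G)$ is the number of maximal cliques of $G$.
   Context: A block graph is a graph in which every maximal 2-connected subgraph (block) is a clique. For a vertex $u$, $N(u)$ is its open neighborhood and $N[u]=N(u)\cup\{u\}$ its closed neighborhood. A set $C\subseteq V$ is a locating-dominating code (LD-code) if $N[u]\cap C\neq\emptyset$ for every vertex $u$ and $N(u)\cap C\neq N(v)\cap C$ for all distinct $u,v\in V\setminus C$. $\gamma^{LD}(G)$ is the minimum cardinality of an LD-code of $G$. *)

From mathcomp Require Import all_boot all_order.
Set Implicit Arguments. Unset Strict Implicit. Unset Printing Implicit Defensive.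

Section Graphs.
Variable T : finType.
Variable e : rel T.

Definition simple_graph : Prop := symmetric e /\ irreflexive e.

Definition nbhd (u : T) : {set T} := [set v | e u v].
Definition cnbhd (u : T) : {set T} := u |: nbhd u.

Definition connected_in (S : {set T}) : bool :=
  [forall x in S, forall y in S,
     connect [rel a b | [&& e a b, a \in S & b \in S]] x y].

Definition two_connected (S : {set T}) : bool :=
  [&& 2 < #|S|, connected_in S & [forall x in S, connected_in (S :\ x)]].

(* a block of order >= 3: a maximal 2-connected vertex set *)
Definition big_block (S : {set T}) : bool :=
  two_connected S && [forall S' : {set T}, (S \proper S') ==> ~~ two_connected S'].

Definition is_clique (S : {set T}) : bool :=
  [forall x in S, forall y in S, (x != y) ==> e x y].

(* block graph: every maximal 2-connected subgraph is a clique
   (blocks that are bridges or isolated vertices are trivially cliques) *)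
Definition block_graph : Prop := forall S : {set T}, big_block S -> is_clique S.

Definition maximal_clique (S : {set T}) : bool :=
  [&& S != set0, is_clique S &
      [forall S' : {set T}, (S \proper S') ==> ~~ is_clique S']].

Definition nQ : nat := #|[set S : {set T} | maximal_clique S]|.

Definition identifiable : Prop :=
  forall u v : T, u != v -> cnbhd u != cnbhd v.

Definition LD_code (C : {set T}) : bool :=
  [forall u, cnbhd u :&: C != set0] &&
  [forall u in ~: C, forall v in ~: C, (u != v) ==> (nbhd u :&: C != nbhd v :&: C)].

(* gamma^LD(G): minimum size of an LD-code. V itself is always an LD-code,
   so the default value #|T| of the iterated minimum is harmless. *)
Definition gammaLD : nat :=
  \big[minn/#|T|]_(C : {set T} | LD_code C) #|C|.
End Graphs.

From mathcomp Require Import all_boot all_order.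
Set Implicit Arguments. Unset Strict Implicit. Unset Printing Implicit Defensive.
Import Order.TTheory.

(* In a block graph every diamond has its chord: if p, q are adjacent and a, b
   are both adjacent to p and q, then {a, b, p, q} is 2-connected, hence lies
   in a block, which is a clique; so a and b are adjacent.
   If G is identifiable, choose a vertex in every maximal clique so that the
   number of distinct chosen vertices is as large as possible.  The chosen set
   C has at most n_Q elements and dominates, as every vertex lies in a maximal
   clique.  Let u, v be outside C with the same neighbours in C.  If u and v
   are adjacent, diamonds force N[u] = N[v], contradicting identifiability.
   Otherwise the representative w of a maximal clique Q containing u is
   adjacent to v, and a maximal clique R containing v and w is represented by
   w itself (any other representative would give a diamond with chord uv);
   choosing u for Q instead then enlarges C.
   If G is not identifiable, twins u, v with N[u] = N[v] make V \ {u} an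
   LD-code. *)

Lemma maxset_properN (T : finType) (P : pred {set T}) (A B : {set T}) :
  maxset P A -> A \proper B -> ~~ P B.
Proof.
move=> maxA ltAB; apply/negP => PB.
have BA := maxsetsup maxA PB (proper_sub ltAB).
by rewrite BA properxx in ltAB.
Qed.

Lemma clique_adj (T : finType) (e : rel T) (Q : {set T}) (x y : T) :
  is_clique e Q -> x \in Q -> y \in Q -> x != y -> e x y.
Proof.
move=> /forall_inP cliqueQ xQ yQ.
by move/forall_inP: (cliqueQ x xQ) => /(_ y yQ)/implyP.
Qed.

Lemma same_trace_adj (T : finType) (e : rel T) (C : {set T}) (u v : T) :
  nbhd e u :&: C = nbhd e v :&: C -> {in C, e u =1 e v}.
Proof. by move=> sameN z zC; move/setP/(_ z): sameN; rewrite !inE zC !andbT. Qed.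

Lemma gammaLD_le (T : finType) (e : rel T) (C : {set T}) :
  LD_code e C -> gammaLD e <= #|C|.
Proof.
move=> LDC; rewrite /gammaLD -minEnat.
exact: (bigmin_le_cond _ (fun C : {set T} => #|C|) LDC).
Qed.

Lemma gammaLD_le_card (T : finType) (e : rel T) : gammaLD e <= #|T|.
Proof.
rewrite /gammaLD -minEnat.
exact: (bigmin_le_id _ #|T| (LD_code e) (fun C : {set T} => #|C|)).
Qed.

Lemma twins_of_not_identifiable (T : finType) (e : rel T) :
  ~ identifiable e -> exists u v, u != v /\ cnbhd e u = cnbhd e v.
Proof.
move=> nidG.
case: (boolP [exists u, exists v, (u != v) && (cnbhd e u == cnbhd e v)]).
  by case/existsP => u /existsP[v /andP[uv /eqP cuv]]; exists u, v.
move/existsPn => noTwins; case: nidG => u v uv.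
by move/existsPn/(_ v): (noTwins u); rewrite uv.
Qed.

Lemma LD_code_setC1_twin (T : finType) (e : rel T) (u v : T) :
  u != v -> cnbhd e u = cnbhd e v -> LD_code e [set~ u].
Proof.
move=> uv cuv; apply/andP; split.
  apply/forallP => w; apply/set0Pn.
  have [-> | wu] := eqVneq w u; last by exists w; rewrite !inE eqxx wu.
  by exists v; rewrite inE cuv !inE eqxx eq_sym.
apply/forall_inP => a; rewrite !inE negbK => /eqP ->.
by apply/forall_inP => b; rewrite !inE negbK => /eqP ->; rewrite eqxx.
Qed.

Section BlockGraph.
Variables (T : finType) (e : rel T).
Hypotheses (e_sym : symmetric e) (e_irr : irreflexive e) (blockG : block_graph e).
Implicit Types (g : {ffun {set T} -> T}) (C K Q R S : {set T}).

Lemma edge_neq x y : e x y -> x != y.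
Proof. by apply: contraTneq => ->; rewrite e_irr. Qed.

Lemma connected_in_star S h :
  h \in S -> (forall z, z \in S -> z != h -> e h z) -> connected_in e S.
Proof.
move=> hS h_adj; apply/forall_inP => x xS; apply/forall_inP => y yS.
set r := (X in connect X x y).
have hub z : z \in S -> connect r z h /\ connect r h z.
  move=> zS; have [-> | zh] := eqVneq z h; first by split; apply: connect0.
  have ehz := h_adj z zS zh.
  by split; apply: connect1; rewrite /r /= 1?(e_sym z) ehz zS hS.
exact: connect_trans (hub x xS).1 (hub y yS).2.
Qed.

Lemma two_connected_diamond a b p q :
  a != b -> e a p -> e a q -> e b p -> e b q -> e p q ->
  two_connected e (a |: (b |: [set p; q])).
Proof.
move=> ab eap eaq ebp ebq epq; set S := a |: (b |: [set p; q]).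
have hub_adj h z : h \in [set p; q] -> z \in S -> z != h -> e h z.
  by rewrite !inE; case/orP=> /eqP-> /or4P[]/eqP->; rewrite ?eqxx // => _; rewrite e_sym.
have hub_conn h (X : {set T}) :
  h \in [set p; q] -> h \in X -> X \subset S -> connected_in e X.
  move=> hpq hX sXS; apply: (connected_in_star hX) => z zX.
  exact: hub_adj hpq (subsetP sXS z zX).
have hubS h : h \in [set p; q] -> h \in S by rewrite !inE => /orP[]->; rewrite ?orbT.
have pH : p \in [set p; q] by rewrite !inE eqxx.
have qH : q \in [set p; q] by rewrite !inE eqxx orbT.
apply/and3P; split.
- rewrite !cardsU1 cards1 !inE (negbTE ab) !(negbTE (edge_neq _)) //.
- exact: hub_conn pH (hubS p pH) (subxx S).
- apply/forall_inP => x xS.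
  have [h hH hx] : exists2 h, h \in [set p; q] & h != x.
    have [xp | xp] := eqVneq x p; last by exists p; rewrite // eq_sym.
    by exists q; rewrite // xp eq_sym (edge_neq epq).
  by apply: (hub_conn h _ hH _ (subD1set S x)); rewrite in_setD1 hx hubS.
Qed.

Lemma diamond_edge a b p q :
  a != b -> e a p -> e a q -> e b p -> e b q -> e p q -> e a b.
Proof.
move=> ab eap eaq ebp ebq epq.
have [B maxB sSB] := maxset_exists (two_connected_diamond ab eap eaq ebp ebq epq).
have cliqueB : is_clique e B.
  apply: blockG; rewrite /big_block maxsetp //=.
  by apply/forallP => B'; apply/implyP; apply: maxset_properN.
by apply: clique_adj cliqueB _ _ ab; apply: (subsetP sSB); rewrite !inE eqxx ?orbT.
Qed.

Lemma maximal_clique_adj Q x y :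
  maximal_clique e Q -> x \in Q -> y \in Q -> x != y -> e x y.
Proof. by case/and3P=> _ cliqueQ _; apply: clique_adj. Qed.

Lemma maximal_clique_exists K :
  K != set0 -> is_clique e K -> exists2 Q, maximal_clique e Q & K \subset Q.
Proof.
move=> K0 cliqueK; have [Q maxQ sKQ] := maxset_exists cliqueK.
exists Q => //; apply/and3P; split; last 1 first.
- by apply/forallP => Q'; apply/implyP; apply: maxset_properN.
- by apply: contraNneq K0 => Q0; rewrite -subset0 -Q0.
- exact: maxsetp maxQ.
Qed.

Lemma mem_maximal_clique x : exists2 Q, maximal_clique e Q & x \in Q.
Proof.
have cliquex : is_clique e [set x].
  by apply/forall_inP => y /set1P-> ; apply/forall_inP => z /set1P->; rewrite eqxx.
have [|Q maxQ] := maximal_clique_exists _ cliquex.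
  by apply/set0Pn; exists x; rewrite inE.
by rewrite sub1set; exists Q.
Qed.

Lemma edge_in_maximal_clique x y :
  e x y -> exists2 Q, maximal_clique e Q & (x \in Q) && (y \in Q).
Proof.
move=> exy; have cliquexy : is_clique e [set x; y].
  apply/forall_inP => u; rewrite !inE => /orP[]/eqP->;
  apply/forall_inP => w; rewrite !inE => /orP[]/eqP->;
  by rewrite ?eqxx // 1?(e_sym y) exy implybT.
have [|Q maxQ] := maximal_clique_exists _ cliquexy.
  by apply/set0Pn; exists x; rewrite !inE eqxx.
by rewrite subUset !sub1set; exists Q.
Qed.

Definition clique_transversal (C : {set T}) : Prop :=
  forall Q, maximal_clique e Q -> exists2 w, w \in Q & w \in C.

Lemma clique_transversal_dominating C :
  clique_transversal C -> forall u, cnbhd e u :&: C != set0.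
Proof.
move=> tC u; have [Q maxQ uQ] := mem_maximal_clique u; have [w wQ wC] := tC Q maxQ.
apply/set0Pn; exists w; rewrite !inE wC andbT.
have [// | wu] := eqVneq w u.
by rewrite (maximal_clique_adj maxQ uQ wQ) ?orbT // eq_sym.
Qed.

Lemma clique_transversal_adjacent_sub C u v :
  clique_transversal C -> u \notin C -> v \notin C ->
  {in C, e u =1 e v} -> e u v -> cnbhd e u \subset cnbhd e v.
Proof.
move=> tC uC vC sameC euv; apply/subsetP => x; rewrite !inE.
case/predU1P => [-> | eux]; first by rewrite e_sym euv orbT.
have [// | xv] := eqVneq x v; apply/orP; right.
have [Q maxQ /andP[uQ xQ]] := edge_in_maximal_clique eux.
have [w wQ wC] := tC Q maxQ.
have euw : e u w by apply: maximal_clique_adj maxQ uQ wQ _; apply: contraNneq uC => ->.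
have evw : e v w by rewrite -sameC.
have [-> // | xw] := eqVneq x w.
have exw := maximal_clique_adj maxQ xQ wQ xw.
by apply: (diamond_edge _ _ evw _ exw euw); rewrite 1?eq_sym 1?e_sym.
Qed.

Lemma clique_transversal_adjacent_twins C u v :
  clique_transversal C -> u \notin C -> v \notin C ->
  {in C, e u =1 e v} -> e u v -> cnbhd e u = cnbhd e v.
Proof.
move=> tC uC vC sameC euv; apply/eqP; rewrite eqEsubset.
rewrite !(clique_transversal_adjacent_sub tC) // 1?e_sym //.
by move=> z zC; rewrite sameC.
Qed.

Definition maximal_cliques : {set {set T}} := [set Q | maximal_clique e Q].

Definition representative (g : {ffun {set T} -> T}) : bool :=
  [forall Q in maximal_cliques, g Q \in Q].

Definition reps (g : {ffun {set T} -> T}) : {set T} := [set g Q | Q in maximal_cliques].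

Lemma representative_exists (x0 : T) : exists g, representative g.
Proof.
exists [ffun Q : {set T} => odflt x0 [pick x in Q]]; apply/forall_inP => Q.
rewrite inE ffunE => /and3P[Q0 _ _]; case: pickP => [// | noneQ].
by case/set0Pn: Q0 => x; rewrite noneQ.
Qed.

Lemma representative_mem g Q : representative g -> maximal_clique e Q -> g Q \in Q.
Proof. by move=> /forall_inP g_rep maxQ; apply: g_rep; rewrite inE. Qed.

Lemma mem_reps g Q : maximal_clique e Q -> g Q \in reps g.
Proof. by move=> maxQ; apply: imset_f; rewrite inE. Qed.

Lemma card_reps g : #|reps g| <= nQ e.
Proof. exact: leq_imset_card. Qed.

Lemma reps_clique_transversal g : representative g -> clique_transversal (reps g).
Proof.
by move=> g_rep Q maxQ; exists (g Q); [apply: representative_mem | apply: mem_reps].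
Qed.

(* Re-pointing [g] at [Q] to [u] loses nothing, since [g Q] is still [g R]. *)
Lemma reps_augment g Q R u :
  representative g -> maximal_clique e Q -> maximal_clique e R -> Q != R ->
  g Q = g R -> u \in Q -> u \notin reps g ->
  exists2 g', representative g' & #|reps g| < #|reps g'|.
Proof.
move=> g_rep maxQ maxR QR gQR uQ uC.
pose g' := [ffun P => if P == Q then u else g P].
exists g'.
  apply/forall_inP => P maxP; rewrite ffunE.
  by case: eqP => [-> // | _]; apply/representative_mem; rewrite // inE in maxP.
have sub : u |: reps g \subset reps g'.
  apply/subsetP => z; rewrite in_setU1 => /predU1P[-> | /imsetP[P maxP ->]].
    by apply/imsetP; exists Q; rewrite ?inE // ffunE eqxx.
  apply/imsetP; have [-> | PQ] := eqVneq P Q.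
    by exists R; rewrite ?inE // ffunE eq_sym (negbTE QR).
  by exists P; rewrite // ffunE (negbTE PQ).
by have := subset_leq_card sub; rewrite cardsU1 uC.
Qed.

Lemma max_reps_separate_nonadjacent g u v :
  representative g -> (forall g', representative g' -> #|reps g'| <= #|reps g|) ->
  u \notin reps g -> v \notin reps g -> u != v -> ~~ e u v ->
  ~ {in reps g, e u =1 e v}.
Proof.
move=> g_rep g_max uC vC uv nuv sameC.
have [Q maxQ uQ] := mem_maximal_clique u.
have wC := mem_reps g maxQ.
have euw : e u (g Q).
  apply: maximal_clique_adj maxQ uQ (representative_mem g_rep maxQ) _.
  by apply: contraNneq uC => ->.
have evw : e v (g Q) by rewrite -sameC.
have [R maxR /andP[vR wR]] := edge_in_maximal_clique evw.
have w'C := mem_reps g maxR.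
have evw' : e v (g R).
  apply: maximal_clique_adj maxR vR (representative_mem g_rep maxR) _.
  by apply: contraNneq vC => ->.
have euw' : e u (g R) by rewrite sameC.
have [w'w | w'w] := eqVneq (g R) (g Q).
  have QR : Q != R.
    apply: contraNneq nuv => QR; rewrite QR in uQ.
    exact: maximal_clique_adj maxR uQ vR uv.
  have [g' g'_rep] := reps_augment g_rep maxQ maxR QR (esym w'w) uQ uC.
  by rewrite ltnNge g_max.
have eww' : e (g Q) (g R).
  by apply: maximal_clique_adj maxR wR (representative_mem g_rep maxR) _; rewrite eq_sym.
by rewrite (diamond_edge uv euw euw' evw evw' eww') in nuv.
Qed.

Lemma max_reps_LD_code g :
  identifiable e -> representative g ->
  (forall g', representative g' -> #|reps g'| <= #|reps g|) -> LD_code e (reps g).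
Proof.
move=> idG g_rep g_max; have tC := reps_clique_transversal g_rep.
apply/andP; split; first by apply/forallP; apply: clique_transversal_dominating.
apply/forall_inP => u; rewrite inE => uC; apply/forall_inP => v; rewrite inE => vC.
apply/implyP => uv; apply/negP => /eqP/same_trace_adj sameC.
have [euv | nuv] := boolP (e u v).
  have twins := clique_transversal_adjacent_twins tC uC vC sameC euv.
  by move: (idG u v uv); rewrite twins eqxx.
exact: max_reps_separate_nonadjacent sameC.
Qed.

Lemma gammaLD_le_nQ : identifiable e -> gammaLD e <= nQ e.
Proof.
move=> idG; have [x0 _ | T0] := pickP (@predT T); last first.
  by apply: (leq_trans (gammaLD_le_card e)); rewrite eq_card0.
have [g0 g0_rep] := representative_exists x0.
case: (arg_maxnP (fun g => #|reps g|) g0_rep) => g g_rep g_max.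
exact: leq_trans (gammaLD_le (max_reps_LD_code idG g_rep g_max)) (card_reps g).
Qed.
End BlockGraph.

Theorem theorem2p3 (T : finType) (e : rel T) :
  simple_graph e -> block_graph e ->
  (identifiable e -> gammaLD e <= nQ e) /\
  (~ identifiable e -> gammaLD e <= #|T| - 1).
Proof.
move=> [e_sym e_irr] blockG; split; first exact: gammaLD_le_nQ.
move=> /twins_of_not_identifiable[u [v [uv cuv]]].
by rewrite subn1 -(cardsC1 u); apply/gammaLD_le/(LD_code_setC1_twin uv cuv).
Qed.
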